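(* Let $\gamma,\lambda\in\mathbb{C}$ and let $\phi:\mathbb{Z}^2\to\mathbb{C}$ be a (generic, nonvanishing) solution of \[ \frac{\big(\gamma\widetilde{\overline\phi}+\lambda\phi\big)\big(\overline\phi-\gamma\widetilde\phi\big)}{\big(\widetilde{\overline\phi}-\overline\phi\big)\big(\widetilde\phi-\phi\big)}=1-\gamma^2. \] Then \[ u=\frac{\phi-\widetilde\phi}{\gamma\phi-\overline\phi},\qquad v=\frac{\overline\phi}{\phi} \] satisfy respectively the lattice sine-Gordon equation $\frac{\widetilde{\overline u}}{u}=\frac{(\gamma\widetilde u-1)(\gamma-\overline u)}{(\gamma-\widetilde u)(\gamma\overline u-1)}$ and the equation \[ \begin{aligned} &\gamma^2\big(v-\widetilde{\overline v}\big)\big(\overline v-\widetilde v\big)\big(\lambda+v\overline v\big)\big(\lambda+\widetilde v\widetilde{\overline v}\big)-(1-\gamma^2)(\gamma^2-\lambda)\big(v\overline v-\widetilde v\widetilde{\overline v}\big)^2\\ &\quad+\gamma(1-\gamma^2)\big(v\overline v-\widetilde v\widetilde{\overline v}\big)\Big(\big(\lambda+v\overline v\big)\big(\widetilde v+\widetilde{\overline v}\big)-\big(v+\overline v\big)\big(\lambda+\widetilde v\widetilde{\overline v}\big)\Big)=0. \end{aligned} \]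
   Context: Shift notation: for $f:\mathbb{Z}^2\to\mathbb{C}$, $f=f_{l,m}$, $\overline f=f_{l+1,m}$, $\widetilde f=f_{l,m+1}$, $\widetilde{\overline f}=f_{l+1,m+1}$. *)

From mathcomp Require Import all_boot all_algebra.
From mathcomp Require Export complex.
From mathcomp Require Import reals Rstruct.
Set Implicit Arguments. Unset Strict Implicit. Unset Printing Implicit Defensive.
Import GRing.Theory.
Local Open Scope ring_scope.

Definition C : numClosedFieldType := (Rdefinitions.R[i])%type.

(* Lattice shifts on functions Z^2 -> C:
   f = f_{l,m}, fb = f_{l+1,m} (overline), ft = f_{l,m+1} (tilde),
   ftb = f_{l+1,m+1}. *)
Definition sh1 (f : int -> int -> C) : int -> int -> C := fun l m => f (l + 1) m.
Definition sh2 (f : int -> int -> C) : int -> int -> C := fun l m => f l (m + 1).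

Definition phi_eq (g lam : C) (phi : int -> int -> C) (l m : int) : Prop :=
  let p := phi l m in let pb := sh1 phi l m in
  let pt := sh2 phi l m in let ptb := sh1 (sh2 phi) l m in
  (g * ptb + lam * p) * (pb - g * pt) / ((ptb - pb) * (pt - p)) = 1 - g ^+ 2.

Definition u_of (g : C) (phi : int -> int -> C) : int -> int -> C :=
  fun l m => (phi l m - sh2 phi l m) / (g * phi l m - sh1 phi l m).

Definition v_of (phi : int -> int -> C) : int -> int -> C :=
  fun l m => sh1 phi l m / phi l m.

Definition sG_eq (g : C) (u : int -> int -> C) (l m : int) : Prop :=
  let x := u l m in let xb := sh1 u l m in
  let xt := sh2 u l m in let xtb := sh1 (sh2 u) l m in
  xtb / x = (g * xt - 1) * (g - xb) / ((g - xt) * (g * xb - 1)).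

Definition v_eq (g lam : C) (v : int -> int -> C) (l m : int) : Prop :=
  let x := v l m in let xb := sh1 v l m in
  let xt := sh2 v l m in let xtb := sh1 (sh2 v) l m in
  g ^+ 2 * (x - xtb) * (xb - xt) * (lam + x * xb) * (lam + xt * xtb)
  - (1 - g ^+ 2) * (g ^+ 2 - lam) * (x * xb - xt * xtb) ^+ 2
  + g * (1 - g ^+ 2) * (x * xb - xt * xtb)
      * ((lam + x * xb) * (xt + xtb) - (x + xb) * (lam + xt * xtb)) = 0.

From mathcomp Require Import all_boot all_algebra.
From mathcomp Require Import ring.
Set Implicit Arguments.
Unset Strict Implicit.
Import GRing.Theory.
Local Open Scope ring_scope.

(* Clearing denominators, the phi-equation on an elementary
   square is AFFINE in the corner value phi_{l+1,m+1}:
     ptb (g(g p - pb) - (p - pt)) = lam p (pb - g pt) - (1 - g^2) pb (p - pt).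
   With u = (p - pt)/(g p - pb), the two coefficients factor as
   (g - u)(g p - pb) and (g u - 1)(g p - pb), so the genericity hypotheses
   on u make them nonzero: the equation can be solved both for the corner
   value and for the parameter lam.  Both target equations only involve
   phi on a staircase of squares.  Solving the equations on the squares
   (l+1,m) and (l,m+1) for their top corners and the equation on (l,m) for
   lam turns each target into a rational identity in the remaining free
   values, verified by [field]. *)

Section QuadAlgebra.
Variable F : fieldType.

Definition quad_affine (g lam p pb pt ptb : F) : Prop :=
  ptb * (g * (g * p - pb) - (p - pt))
  = lam * p * (pb - g * pt) - (1 - g ^+ 2) * pb * (p - pt).

Definition uq (g p pb pt : F) : F := (p - pt) / (g * p - pb).

Definition sG_rel (g x xb xt xtb : F) : Prop :=
  xtb / x = (g * xt - 1) * (g - xb) / ((g - xt) * (g * xb - 1)).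

Definition v_poly (g lam x xb xt xtb : F) : F :=
  g ^+ 2 * (x - xtb) * (xb - xt) * (lam + x * xb) * (lam + xt * xtb)
  - (1 - g ^+ 2) * (g ^+ 2 - lam) * (x * xb - xt * xtb) ^+ 2
  + g * (1 - g ^+ 2) * (x * xb - xt * xtb)
      * ((lam + x * xb) * (xt + xtb) - (x + xb) * (lam + xt * xtb)).

Lemma quad_affine_of_quotient (g lam p pb pt ptb : F) :
  ptb - pb != 0 -> pt - p != 0 ->
  (g * ptb + lam * p) * (pb - g * pt) / ((ptb - pb) * (pt - p)) = 1 - g ^+ 2 ->
  quad_affine g lam p pb pt ptb.
Proof.
move=> nz_tb nz_t E.
have E0 : (g * ptb + lam * p) * (pb - g * pt)
          - (1 - g ^+ 2) * ((ptb - pb) * (pt - p)) = 0.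
  by rewrite -E; field; rewrite nz_t nz_tb.
apply/eqP; rewrite /quad_affine -subr_eq0 -oppr0 -E0; apply/eqP; ring.
Qed.

Lemma corner_coefE (g p pb pt : F) : g * p - pb != 0 ->
  g - uq g p pb pt = (g * (g * p - pb) - (p - pt)) / (g * p - pb).
Proof. by move=> nzA; rewrite /uq; field. Qed.

Lemma lam_coefE (g p pb pt : F) : g * p - pb != 0 ->
  g * uq g p pb pt - 1 = (pb - g * pt) / (g * p - pb).
Proof. by move=> nzA; rewrite /uq; field. Qed.

Lemma numer_neq0 (x y : F) : x / y != 0 -> x != 0.
Proof. by rewrite mulf_eq0 negb_or => /andP[]. Qed.

Lemma corner_coef_neq0 (g p pb pt : F) :
  g * p - pb != 0 -> g - uq g p pb pt != 0 ->
  g * (g * p - pb) - (p - pt) != 0.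
Proof. by move=> nzA; rewrite corner_coefE //; apply: numer_neq0. Qed.

Lemma lam_coef_neq0 (g p pb pt : F) :
  g * p - pb != 0 -> g * uq g p pb pt - 1 != 0 -> pb - g * pt != 0.
Proof. by move=> nzA; rewrite lam_coefE //; apply: numer_neq0. Qed.

Lemma corner_solve (g lam p pb pt ptb : F) :
  g * (g * p - pb) - (p - pt) != 0 -> quad_affine g lam p pb pt ptb ->
  ptb = (lam * p * (pb - g * pt) - (1 - g ^+ 2) * pb * (p - pt))
        / (g * (g * p - pb) - (p - pt)).
Proof. by move=> nzC E; rewrite -E; field. Qed.

Lemma lam_solve (g lam p pb pt ptb : F) :
  p != 0 -> pb - g * pt != 0 -> quad_affine g lam p pb pt ptb ->
  lam = (ptb * (g * (g * p - pb) - (p - pt)) + (1 - g ^+ 2) * pb * (p - pt))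
        / (p * (pb - g * pt)).
Proof. by move=> nz_p nzL E; rewrite E; field; rewrite nzL nz_p. Qed.

Lemma sG_identity (g lam p00 p10 p01 p11 p20 p21 p02 p12 : F) :
  p00 != 0 ->
  g * p00 - p10 != 0 -> g * p10 - p20 != 0 ->
  g * p01 - p11 != 0 -> g * p11 - p21 != 0 ->
  uq g p00 p10 p01 != 0 ->
  g - uq g p10 p20 p11 != 0 -> g - uq g p01 p11 p02 != 0 ->
  g * uq g p10 p20 p11 - 1 != 0 -> g * uq g p00 p10 p01 - 1 != 0 ->
  quad_affine g lam p00 p10 p01 p11 ->
  quad_affine g lam p10 p20 p11 p21 ->
  quad_affine g lam p01 p11 p02 p12 ->
  sG_rel g (uq g p00 p10 p01) (uq g p10 p20 p11) (uq g p01 p11 p02)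
    (uq g p11 p21 p12).
Proof.
move=> nz00 A00 A10 A01 A11 nz_u g_u10 g_u01 gu1_10 gu1_00 E00 E10 E01.
have C10 := corner_coef_neq0 A10 g_u10; have C01 := corner_coef_neq0 A01 g_u01.
have L10 := lam_coef_neq0 A10 gu1_10; have L00 := lam_coef_neq0 A00 gu1_00.
rewrite /sG_rel (corner_coefE _ A10) (corner_coefE _ A01).
rewrite (lam_coefE _ A10) (lam_coefE _ A01).
apply: (canLR (mulfK nz_u)); rewrite /uq; apply: (canLR (mulfK A11)).
rewrite (corner_solve C10 E10) (corner_solve C01 E01) (lam_solve nz00 L00 E00).
by field; rewrite nz00 A00 A10 A01 C10 C01 L10 L00.
Qed.

Lemma v_identity (g lam p00 p10 p01 p11 p20 p21 : F) :
  p00 != 0 -> p10 != 0 -> p01 != 0 -> p11 != 0 ->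
  g * p00 - p10 != 0 -> g * p10 - p20 != 0 ->
  g - uq g p10 p20 p11 != 0 -> g * uq g p00 p10 p01 - 1 != 0 ->
  quad_affine g lam p00 p10 p01 p11 ->
  quad_affine g lam p10 p20 p11 p21 ->
  v_poly g lam (p10 / p00) (p20 / p10) (p11 / p01) (p21 / p11) = 0.
Proof.
move=> nz00 nz10 nz01 nz11 A00 A10 g_u10 gu1_00 E00 E10.
have C10 := corner_coef_neq0 A10 g_u10; have L00 := lam_coef_neq0 A00 gu1_00.
rewrite /v_poly (corner_solve C10 E10) (lam_solve nz00 L00 E00).
by field; rewrite nz00 nz01 nz10 nz11 C10 L00.
Qed.

End QuadAlgebra.

Section Lattice.
Variables (g lam : C) (phi : int -> int -> C).
Hypothesis Hphi0 : forall l m, phi l m != 0.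
Hypothesis Hd1 : forall l m, sh1 (sh2 phi) l m - sh1 phi l m != 0.
Hypothesis Hd2 : forall l m, sh2 phi l m - phi l m != 0.
Hypothesis Hdu : forall l m, g * phi l m - sh1 phi l m != 0.
Hypothesis Hu0 : forall l m, u_of g phi l m != 0.
Hypothesis Hs1 : forall l m, g - u_of g phi l m != 0.
Hypothesis Hs2 : forall l m, g * u_of g phi l m - 1 != 0.
Hypothesis Heq : forall l m, phi_eq g lam phi l m.

Lemma phi_affine l m :
  quad_affine g lam (phi l m) (phi (l + 1) m) (phi l (m + 1))
    (phi (l + 1) (m + 1)).
Proof. exact: quad_affine_of_quotient (Hd1 l m) (Hd2 l m) (Heq l m). Qed.

Lemma u_ofE l m :
  u_of g phi l m = uq g (phi l m) (phi (l + 1) m) (phi l (m + 1)).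
Proof. by []. Qed.

Lemma u_satisfies_sG l m : sG_eq g (u_of g phi) l m.
Proof.
rewrite -[sG_eq _ _ _ _]/(sG_rel g _ _ _ _) /sh1 /sh2 !u_ofE.
apply: sG_identity;
  [exact: Hphi0 | exact: Hdu | exact: Hdu | exact: Hdu | exact: Hdu
  | exact: Hu0 | exact: Hs1 | exact: Hs1 | exact: Hs2 | exact: Hs2
  | exact: phi_affine | exact: phi_affine | exact: phi_affine].
Qed.

Lemma v_satisfies_veq l m : v_eq g lam (v_of phi) l m.
Proof.
rewrite -[v_eq _ _ _ _ _]/(v_poly g lam _ _ _ _ = 0) /v_of /sh1 /sh2.
apply: v_identity;
  [exact: Hphi0 | exact: Hphi0 | exact: Hphi0 | exact: Hphi0 | exact: Hdu
  | exact: Hdu | exact: Hs1 | exact: Hs2 | exact: phi_affine | exact: phi_affine].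
Qed.

End Lattice.

Theorem mainTheorem12 (g lam : C) (phi : int -> int -> C)
  (* genericity: phi nonvanishing and all denominators nonzero *)
  (Hphi0 : forall l m, phi l m != 0)
  (Hd1 : forall l m, sh1 (sh2 phi) l m - sh1 phi l m != 0)
  (Hd2 : forall l m, sh2 phi l m - phi l m != 0)
  (Hdu : forall l m, g * phi l m - sh1 phi l m != 0)
  (Hu0 : forall l m, u_of g phi l m != 0)
  (Hs1 : forall l m, g - u_of g phi l m != 0)
  (Hs2 : forall l m, g * u_of g phi l m - 1 != 0)
  (Heq : forall l m, phi_eq g lam phi l m) :
  (forall l m, sG_eq g (u_of g phi) l m) /\
  (forall l m, v_eq g lam (v_of phi) l m).
Proof.
split=> l m.
- exact: (u_satisfies_sG Hphi0 Hd1 Hd2 Hdu Hu0 Hs1 Hs2 Heq).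
- exact: (v_satisfies_veq Hphi0 Hd1 Hd2 Hdu Hs1 Hs2 Heq).
Qed.
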